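(* Let $r_g>0$, $E>0$ and $n\in\{2,3\}$. For $r>0$ let $X(r)>0$ be the unique positive solution of $$X^n+\sqrt{r_g/r}\;X-E=0,$$ and define $H(r)=(n+1)\sqrt{r_g/r}-\dfrac{nE}{X(r)}$. Then $H$ has exactly one zero $r_H$ on $(0,\infty)$, given by $$r_H=\frac{3r_g}{4E}\quad(n=2),\qquad r_H=r_g\Big(\frac{16}{27E^2}\Big)^{2/3}\quad(n=3),$$ and $H$ is differentiable at $r_H$ with $H'(r_H)\neq0$. Consequently, for any $r_1>r_H$, $\big|\int_{r}^{r_1}ds/H(s)\big|\to\infty$ (logarithmically) as $r\to r_H^+$.
   Context: Physical interpretation: for an ingoing massless test particle of energy $E$ with dispersion relation $F(\zeta)=\zeta^n$ in the Painlevé–Gullstrand Schwarzschild background ($N=f=1$, shift $N^r=-\sqrt{r_g/r}$), the coordinate time along the trajectory is $t=t_0+\int dr/H(r,E)$; the divergence of $t$ at $r_H$ defines an energy-dependent horizon at $r_H$. *)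

From Stdlib Require Import Reals.
Open Scope R_scope.

Definition is_root_fun (n : nat) (rg E : R) (X : R -> R) : Prop :=
  forall r, 0 < r -> 0 < X r /\ X r ^ n + sqrt (rg / r) * X r - E = 0.

Definition Hfun (n : nat) (rg E : R) (X : R -> R) (r : R) : R :=
  INR (n + 1) * sqrt (rg / r) - INR n * E / X r.

Definition rH_formula (n : nat) (rg E : R) : R :=
  match n with
  | 2%nat => 3 * rg / (4 * E)
  | _ => rg * Rpower (16 / (27 * E ^ 2)) (2 / 3)
  end.

From Stdlib Require Import Reals Lra Psatz.
From Coquelicot Require Import Coquelicot.
Open Scope R_scope.

(** Eliminating [E] with the root equation turns [H] into [a r - n X(r)^(n-1)],
    where [a r = sqrt (rg / r)].  Comparing two positive roots of [X^n + a X = E]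
    gives [H r - H rH = (a r - a rH) (1 + F)] with [F = root_shift_factor ...] in
    [[0, n]], so [H] vanishes exactly where [a = n X^(n-1)], which is at [rH].
    Since moreover [a r - a rH = (rH - r) rg / (r rH (a r + a rH))], we get a
    Carathéodory factorisation [H r = (r - rH) Hslope r] with [Hslope] continuous
    and negative: hence [H'(rH) = Hslope rH <> 0], and on [(rH, r1]] the bound
    [k (s - rH) <= - H s <= K (s - rH)] squeezes [\int ds / H] between multiples
    of [ln (r - rH)]. *)

Fixpoint hsum (n : nat) (x y : R) : R :=
  match n with
  | O => 0
  | S m => x ^ m + y * hsum m x y
  end.

Lemma pow_sub_hsum n x y : x ^ n - y ^ n = (x - y) * hsum n x y.
Proof.
induction n as [|n IH]; simpl; [ring|].
replace (x * x ^ n - y * y ^ n) with (x ^ n * (x - y) + y * (x ^ n - y ^ n)) by ring.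
rewrite IH; ring.
Qed.

Lemma hsum_ge0 n x y : 0 <= x -> 0 <= y -> 0 <= hsum n x y.
Proof.
intros hx hy; induction n as [|n IH]; simpl; [lra|].
pose proof (pow_le x n hx); nra.
Qed.

Lemma pow_le_hsum n x y : 0 <= x -> 0 <= y -> y ^ n <= hsum (S n) x y.
Proof.
intros hx hy; induction n as [|n IH]; simpl in *; [lra|].
pose proof (pow_le x (S n) hx); simpl in *; nra.
Qed.

Lemma mul_hsum_pred_le n x y : 0 <= x -> 0 <= y -> y * hsum (n - 1) x y <= hsum n x y.
Proof.
intros hx hy; destruct n as [|n]; simpl; [lra|].
rewrite Nat.sub_0_r; pose proof (pow_le x n hx); lra.
Qed.

Lemma continuity_hsum n y : continuity (fun x => hsum n x y).
Proof.
induction n as [|n IH]; simpl.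
- apply continuity_const; intros ? ?; reflexivity.
- apply (continuity_plus (fun x => x ^ n) (fun x => y * hsum n x y)).
  + apply derivable_continuous, derivable_pow.
  + apply (continuity_scal (fun x => hsum n x y)), IH.
Qed.

Lemma root_eq_sub n a b x y : x ^ n + a * x = y ^ n + b * y ->
  (x - y) * (hsum n x y + a) = (b - a) * y.
Proof.
intros e; pose proof (pow_sub_hsum n x y); nra.
Qed.

Lemma root_inj n a x y : 0 < a -> 0 <= x -> 0 <= y ->
  x ^ n + a * x = y ^ n + a * y -> x = y.
Proof.
intros ha hx hy e; apply root_eq_sub in e.
pose proof (hsum_ge0 n x y hx hy).
assert (e0 : (x - y) * (hsum n x y + a) = 0) by (rewrite e; ring).
apply Rmult_integral in e0 as [e0|e0]; lra.
Qed.

Lemma root_lipschitz n a b x y : (0 < n)%nat -> 0 < a -> 0 <= x -> 0 <= y ->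
  x ^ n + a * x = y ^ n + b * y -> Rabs (x - y) * y ^ (n - 1) <= Rabs (a - b) * y.
Proof.
intros hn ha hx hy e; apply root_eq_sub in e.
assert (hq : y ^ (n - 1) <= hsum n x y + a).
{ destruct n as [|m]; [lia|]; rewrite Nat.sub_succ, Nat.sub_0_r.
  pose proof (pow_le_hsum m x y hx hy); lra. }
assert (habs : Rabs (x - y) * (hsum n x y + a) = Rabs (a - b) * y).
{ pose proof (hsum_ge0 n x y hx hy).
  replace (b - a) with (- (a - b)) in e by ring.
  apply (f_equal Rabs) in e; rewrite !Rabs_mult, Rabs_Ropp in e.
  rewrite (Rabs_pos_eq (hsum n x y + a)), (Rabs_pos_eq y) in e by lra; exact e. }
pose proof (Rabs_pos (x - y)); nra.
Qed.

Lemma root_Hfun n a E x : 0 < x -> x ^ n + a * x = E ->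
  INR (n + 1) * a - INR n * E / x = a - INR n * x ^ (n - 1).
Proof.
intros hx <-; destruct n as [|m]; [simpl; field; lra|].
rewrite Nat.sub_succ, Nat.sub_0_r, plus_INR; simpl pow; simpl (INR 1).
field; lra.
Qed.

Definition root_shift_factor (n : nat) (x y a : R) : R :=
  INR n * y * hsum (n - 1) x y / (hsum n x y + a).

Lemma root_shift_factor_bounds n x y a : 0 < a -> 0 <= x -> 0 <= y ->
  0 <= root_shift_factor n x y a <= INR n.
Proof.
intros ha hx hy; unfold root_shift_factor.
pose proof (hsum_ge0 n x y hx hy); pose proof (hsum_ge0 (n - 1) x y hx hy).
pose proof (mul_hsum_pred_le n x y hx hy); pose proof (pos_INR n).
split.
- apply Rmult_le_pos; [|left; apply Rinv_0_lt_compat; lra].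
  apply Rmult_le_pos; [|lra]; apply Rmult_le_pos; lra.
- apply Rmult_le_reg_r with (hsum n x y + a); [lra|].
  unfold Rdiv; rewrite Rmult_assoc, Rinv_l by lra; nra.
Qed.

Lemma root_pow_pred_sub n a b x y : 0 < a -> 0 <= x -> 0 <= y ->
  x ^ n + a * x = y ^ n + b * y ->
  (a - INR n * x ^ (n - 1)) - (b - INR n * y ^ (n - 1))
  = (a - b) * (1 + root_shift_factor n x y a).
Proof.
intros ha hx hy e; apply root_eq_sub in e.
pose proof (hsum_ge0 n x y hx hy).
assert (exy : x - y = (b - a) * y / (hsum n x y + a)) by (rewrite <- e; field; lra).
replace ((a - INR n * x ^ (n - 1)) - (b - INR n * y ^ (n - 1)))
  with ((a - b) - INR n * ((x - y) * hsum (n - 1) x y)) by (rewrite <- pow_sub_hsum; ring).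
rewrite exy; unfold root_shift_factor; field; lra.
Qed.

Lemma sqrt_div_sub k r s : 0 < k -> 0 < r -> 0 < s ->
  sqrt (k / r) - sqrt (k / s) = (s - r) * (k / (r * s * (sqrt (k / r) + sqrt (k / s)))).
Proof.
intros hk hr hs.
assert (hkr : 0 < sqrt (k / r)) by (apply sqrt_lt_R0, Rdiv_lt_0_compat; lra).
assert (hks : 0 < sqrt (k / s)) by (apply sqrt_lt_R0, Rdiv_lt_0_compat; lra).
apply Rmult_eq_reg_r with (sqrt (k / r) + sqrt (k / s)); [|lra].
replace ((sqrt (k / r) - sqrt (k / s)) * (sqrt (k / r) + sqrt (k / s)))
  with (sqrt (k / r) * sqrt (k / r) - sqrt (k / s) * sqrt (k / s)) by ring.
rewrite !sqrt_sqrt by (left; apply Rdiv_lt_0_compat; lra).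
field; lra.
Qed.

Lemma continuity_pt_sqrt_div k r : 0 <= k -> 0 < r ->
  continuity_pt (fun r => sqrt (k / r)) r.
Proof.
intros hk hr.
apply (continuity_pt_comp (fun r => k / r) sqrt).
- apply (continuity_pt_div (fun _ => k) id); [apply continuity_pt_const; intros ? ?; reflexivity
  | apply continuity_pt_id | unfold id; lra].
- apply continuity_pt_sqrt; apply Rdiv_le_0_compat; lra.
Qed.

Lemma continuity_pt_lipschitz (f g : R -> R) x0 K eta : 0 < eta -> 0 <= K ->
  (forall x, Rabs (x - x0) < eta -> Rabs (f x - f x0) <= K * Rabs (g x - g x0)) ->
  continuity_pt g x0 -> continuity_pt f x0.
Proof.
intros heta hK hl hg eps heps.
destruct (hg (eps / (K + 1))) as [alp [halp hx]]; [apply Rdiv_lt_0_compat; lra|].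
exists (Rmin alp eta); split; [apply Rmin_pos; lra|].
intros x [hD hd]; simpl in *; unfold R_dist in *.
assert (h1 : Rabs (x - x0) < alp) by (eapply Rlt_le_trans; [exact hd|apply Rmin_l]).
assert (h2 : Rabs (x - x0) < eta) by (eapply Rlt_le_trans; [exact hd|apply Rmin_r]).
specialize (hx x (conj hD h1)); simpl in hx; unfold R_dist in hx.
assert (hgK : K * Rabs (g x - g x0) <= K * (eps / (K + 1))) by (apply Rmult_le_compat_l; lra).
assert (hKe : K * (eps / (K + 1)) < eps).
{ apply Rmult_lt_reg_r with (K + 1); [lra|].
  replace (K * (eps / (K + 1)) * (K + 1)) with (K * eps) by (field; lra); nra. }
specialize (hl x h2); lra.
Qed.

Lemma derivable_pt_lim_slope (h phi : R -> R) x0 eta : 0 < eta ->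
  (forall x, Rabs (x - x0) < eta -> h x - h x0 = (x - x0) * phi x) ->
  continuity_pt phi x0 -> derivable_pt_lim h x0 (phi x0).
Proof.
intros heta hh hphi eps heps.
destruct (hphi eps heps) as [alp [halp hx]].
exists (mkposreal (Rmin alp eta) (Rmin_pos _ _ halp heta)); simpl.
intros d hd0 hd.
assert (h1 : Rabs d < alp) by (eapply Rlt_le_trans; [exact hd|apply Rmin_l]).
assert (h2 : Rabs (x0 + d - x0) < eta)
  by (replace (x0 + d - x0) with d by ring; eapply Rlt_le_trans; [exact hd|apply Rmin_r]).
rewrite hh by exact h2.
replace ((x0 + d - x0) * phi (x0 + d) / d) with (phi (x0 + d)) by (field; exact hd0).
apply (hx (x0 + d)); simpl; unfold R_dist, D_x, no_cond; repeat split.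
- intro c; apply hd0; lra.
- replace (x0 + d - x0) with d by ring; exact h1.
Qed.

Lemma is_RInt_inv_sub K c r r1 : c < r <= r1 ->
  is_RInt (fun s => K / (s - c)) r r1 (K * (ln (r1 - c) - ln (r - c))).
Proof.
intros hr.
replace (K * (ln (r1 - c) - ln (r - c))) with
  (minus ((fun s => K * ln (s - c)) r1) ((fun s => K * ln (s - c)) r))
  by (unfold minus, plus, opp; simpl; ring).
apply (is_RInt_derive (fun s => K * ln (s - c))); intros x hx;
  rewrite Rmin_left, Rmax_right in hx by lra.
- auto_derive; [lra|field; lra].
- apply continuity_pt_filterlim.
  apply (continuity_pt_div (fun _ => K) (fun s => s - c)); [| |lra].
  + apply continuity_pt_const; intros ? ?; reflexivity.
  + apply (continuity_pt_minus id (fun _ => c));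
      [apply continuity_pt_id|apply continuity_pt_const; intros ? ?; reflexivity].
Qed.

Lemma RiemannInt_inv_linear_bounds (h : R -> R) c r r1 k K : 0 < k -> 0 < K -> c < r < r1 ->
  (forall s, c < s <= r1 -> k * (s - c) <= - h s <= K * (s - c)) ->
  forall pr : Riemann_integrable (fun s => / h s) r r1,
  (ln (r1 - c) - ln (r - c)) / K <= Rabs (RiemannInt pr) <= (ln (r1 - c) - ln (r - c)) / k.
Proof.
intros hk hK hr hb pr.
rewrite <- RInt_Reals.
assert (hL : 0 < ln (r1 - c) - ln (r - c)).
{ assert (ln (r - c) < ln (r1 - c)) by (apply ln_increasing; lra). lra. }
assert (hinv : forall s, c < s < r1 -> - / k / (s - c) <= / h s <= - / K / (s - c)).
{ intros s hs; destruct (hb s ltac:(lra)) as [b1 b2].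
  assert (0 < k * (s - c)) by (apply Rmult_lt_0_compat; lra).
  replace (/ h s) with (- / (- h s)) by (field; lra).
  replace (- / k / (s - c)) with (- / (k * (s - c))) by (field; lra).
  replace (- / K / (s - c)) with (- / (K * (s - c))) by (field; lra).
  split; apply Ropp_le_contravar, Rinv_le_contravar; lra. }
assert (i1 := is_RInt_inv_sub (- / k) c r r1 ltac:(lra)).
assert (i2 := is_RInt_inv_sub (- / K) c r r1 ltac:(lra)).
assert (ex := ex_RInt_Reals_1 _ _ _ pr).
assert (l1 : RInt (fun s => - / k / (s - c)) r r1 <= RInt (fun s => / h s) r r1)
  by (apply RInt_le; [lra|eexists; eauto|auto|intros s hs; apply hinv; lra]).
assert (l2 : RInt (fun s => / h s) r r1 <= RInt (fun s => - / K / (s - c)) r r1)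
  by (apply RInt_le; [lra|auto|eexists; eauto|intros s hs; apply hinv; lra]).
rewrite (is_RInt_unique _ _ _ _ i1) in l1; rewrite (is_RInt_unique _ _ _ _ i2) in l2.
assert (0 < (ln (r1 - c) - ln (r - c)) / K) by (apply Rdiv_lt_0_compat; lra).
rewrite Rabs_left by (unfold Rdiv in *; lra).
unfold Rdiv in *; lra.
Qed.

Lemma log_sandwich k K L t v : 0 < k -> 0 < K -> 0 < t < 1 ->
  (L - ln t) / K <= v <= (L - ln t) / k ->
  / K * Rabs (ln t) - Rabs L * (/ k + / K) <= v <= / k * Rabs (ln t) + Rabs L * (/ k + / K).
Proof.
intros hk hK ht hv.
assert (hl : Rabs (ln t) = - ln t) by (apply Rabs_left; rewrite <- ln_1; apply ln_increasing; lra).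
rewrite hl; unfold Rdiv in hv.
assert (- Rabs L <= L <= Rabs L) by (unfold Rabs; destruct Rcase_abs; lra).
pose proof (Rinv_0_lt_compat k hk); pose proof (Rinv_0_lt_compat K hK).
split; nra.
Qed.

Lemma log_unbounded K L t v M : 0 < K -> 0 < t < exp (- (K * Rabs M + Rabs L)) ->
  (L - ln t) / K <= v -> M < v.
Proof.
intros hK ht hv.
assert (hl : ln t < - (K * Rabs M + Rabs L))
  by (rewrite <- (ln_exp (- (K * Rabs M + Rabs L))); apply ln_increasing; lra).
assert (- Rabs L <= L) by (unfold Rabs; destruct Rcase_abs; lra).
assert (Rabs M < (L - ln t) / K).
{ apply Rmult_lt_reg_r with K; [lra|]; unfold Rdiv; rewrite Rmult_assoc, Rinv_l; lra. }
pose proof (RRle_abs M); lra.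
Qed.

Lemma rH_formula_spec n rg E : 0 < E -> n = 2%nat \/ n = 3%nat ->
  exists x0, 0 < x0 /\ INR (n + 1) * x0 ^ n = E /\
    rH_formula n rg E * (INR n * x0 ^ (n - 1)) ^ 2 = rg.
Proof.
intros hE [-> | ->]; cbn [rH_formula].
- exists (sqrt (E / 3)).
  assert (hx : sqrt (E / 3) * sqrt (E / 3) = E / 3) by (apply sqrt_sqrt; lra).
  split; [apply sqrt_lt_R0; lra|]; simpl; split; [nra|].
  replace ((1 + 1) * (sqrt (E / 3) * 1) * ((1 + 1) * (sqrt (E / 3) * 1) * 1))
    with (4 * (sqrt (E / 3) * sqrt (E / 3))) by ring.
  rewrite hx; field; lra.
- set (x0 := Rpower (E / 4) (/ 3)).
  assert (hx0 : 0 < x0) by apply exp_pos.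
  assert (hx3 : x0 ^ 3 = E / 4).
  { unfold x0; rewrite <- Rpower_pow, Rpower_mult by apply exp_pos.
    replace (/ 3 * INR 3) with 1 by (simpl; field); apply Rpower_1; lra. }
  assert (hy : 0 < / (3 * x0 ^ 2)) by (apply Rinv_0_lt_compat; nra).
  assert (hR : Rpower (16 / (27 * E ^ 2)) (2 / 3) = (/ (3 * x0 ^ 2)) ^ 2).
  { replace (16 / (27 * E ^ 2)) with (Rpower (/ (3 * x0 ^ 2)) (INR 3)).
    - rewrite Rpower_mult; replace (INR 3 * (2 / 3)) with (INR 2) by (simpl; field).
      apply Rpower_pow; exact hy.
    - rewrite Rpower_pow by exact hy; replace E with (4 * x0 ^ 3) by lra.
      simpl; field; lra. }
  exists x0; split; [exact hx0|]; split; [simpl in *; lra|].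
  rewrite hR; simpl; field; lra.
Qed.

Ltac continuity_pt_split :=
  match goal with
  | |- continuity_pt (fun _ => ?c) _ => apply continuity_pt_const; intros ? ?; reflexivity
  | |- continuity_pt (fun r => r) _ => apply continuity_pt_id
  | |- continuity_pt (fun r => @?A r + @?B r) _ =>
      apply (continuity_pt_plus A B); continuity_pt_split
  | |- continuity_pt (fun r => @?A r - @?B r) _ =>
      apply (continuity_pt_minus A B); continuity_pt_split
  | |- continuity_pt (fun r => - @?A r) _ => apply (continuity_pt_opp A); continuity_pt_split
  | |- continuity_pt (fun r => @?A r * @?B r) _ =>
      apply (continuity_pt_mult A B); continuity_pt_split
  | |- continuity_pt (fun r => @?A r / @?B r) _ =>
      apply (continuity_pt_div A B); [continuity_pt_split|continuity_pt_split|]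
  | |- continuity_pt (fun r => / @?A r) _ => apply (continuity_pt_inv A); [continuity_pt_split|]
  | _ => idtac
  end.

Section Horizon.

Variables (n : nat) (rg E rH x0 : R) (X : R -> R).
Hypotheses (hn : (0 < n)%nat) (hrg : 0 < rg) (hX : is_root_fun n rg E X).
Hypotheses (hx0 : 0 < x0) (hx0E : INR (n + 1) * x0 ^ n = E)
  (hrH : rH * (INR n * x0 ^ (n - 1)) ^ 2 = rg).

Let H := Hfun n rg E X.

Lemma horizon_slope_pos : 0 < INR n * x0 ^ (n - 1).
Proof. apply Rmult_lt_0_compat; [apply lt_0_INR|apply pow_lt]; auto. Qed.

Lemma horizon_pos : 0 < rH.
Proof.
pose proof horizon_slope_pos as hp; set (p := INR n * x0 ^ (n - 1)) in *.
replace rH with (rg / p ^ 2) by (rewrite <- hrH; field; lra).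
apply Rdiv_lt_0_compat; [lra|apply pow_lt; lra].
Qed.

Lemma sqrt_div_horizon : sqrt (rg / rH) = INR n * x0 ^ (n - 1).
Proof.
pose proof horizon_pos; pose proof horizon_slope_pos; set (p := INR n * x0 ^ (n - 1)) in *.
apply sqrt_lem_1; [left; apply Rdiv_lt_0_compat|lra|]; try lra.
rewrite <- hrH; field; lra.
Qed.

Lemma sqrt_div_pos r : 0 < r -> 0 < sqrt (rg / r).
Proof. intros hr; apply sqrt_lt_R0, Rdiv_lt_0_compat; lra. Qed.

Lemma X_root r : 0 < r -> 0 < X r /\ X r ^ n + sqrt (rg / r) * X r = E.
Proof. intros hr; destruct (hX r hr); split; lra. Qed.

Lemma X_unique r Y : 0 < r -> 0 < Y -> Y ^ n + sqrt (rg / r) * Y - E = 0 -> Y = X r.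
Proof.
intros hr hY e; destruct (X_root r hr) as [hXr eXr].
apply (root_inj n (sqrt (rg / r))); try lra; apply sqrt_div_pos; lra.
Qed.

Lemma Hfun_root r : 0 < r -> H r = sqrt (rg / r) - INR n * X r ^ (n - 1).
Proof. intros hr; destruct (X_root r hr); apply root_Hfun; auto. Qed.

Definition Hslope (r : R) : R :=
  - rg * (1 + root_shift_factor n (X r) x0 (sqrt (rg / r)))
  / (r * rH * (sqrt (rg / r) + sqrt (rg / rH))).

Lemma Hfun_factor r : 0 < r -> H r = (r - rH) * Hslope r.
Proof.
intros hr; pose proof horizon_pos; destruct (X_root r hr) as [hXr eXr].
rewrite Hfun_root by exact hr.
replace (sqrt (rg / r) - INR n * X r ^ (n - 1))
  with ((sqrt (rg / r) - INR n * X r ^ (n - 1)) - (sqrt (rg / rH) - INR n * x0 ^ (n - 1)))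
  by (rewrite sqrt_div_horizon; ring).
rewrite root_pow_pred_sub, sqrt_div_sub; try lra.
- unfold Hslope; pose proof (sqrt_div_pos r hr); pose proof (sqrt_div_pos rH horizon_pos).
  field; repeat split; lra.
- apply sqrt_div_pos; lra.
- rewrite sqrt_div_horizon, eXr, <- hx0E, plus_INR.
  destruct n as [|m]; [lia|]; rewrite Nat.sub_succ, Nat.sub_0_r; simpl; ring.
Qed.

Lemma Hfun_horizon : H rH = 0.
Proof. rewrite Hfun_factor by apply horizon_pos; ring. Qed.

Lemma Hslope_scale_pos r : 0 < r -> 0 < rg / (r * rH * (sqrt (rg / r) + sqrt (rg / rH))).
Proof.
intros hr; pose proof horizon_pos; pose proof (sqrt_div_pos r hr).
pose proof (sqrt_div_pos rH horizon_pos).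
apply Rdiv_lt_0_compat; [lra|]; repeat apply Rmult_lt_0_compat; lra.
Qed.

Lemma Hslope_bounds r : 0 < r ->
  rg / (r * rH * (sqrt (rg / r) + sqrt (rg / rH))) <= - Hslope r <=
  (1 + INR n) * rg / (r * rH * (sqrt (rg / r) + sqrt (rg / rH))).
Proof.
intros hr; destruct (X_root r hr) as [hXr _].
pose proof (root_shift_factor_bounds n (X r) x0 (sqrt (rg / r)) (sqrt_div_pos r hr) ltac:(lra) ltac:(lra)).
pose proof (Hslope_scale_pos r hr) as hk.
set (k := rg / (r * rH * (sqrt (rg / r) + sqrt (rg / rH)))) in *.
replace (- Hslope r) with (k * (1 + root_shift_factor n (X r) x0 (sqrt (rg / r))))
  by (unfold Hslope, k, Rdiv; ring).
replace ((1 + INR n) * rg / (r * rH * (sqrt (rg / r) + sqrt (rg / rH)))) with (k * (1 + INR n))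
  by (unfold k, Rdiv; ring).
split; nra.
Qed.

Lemma Hslope_neg r : 0 < r -> Hslope r < 0.
Proof.
intros hr; pose proof (Hslope_scale_pos r hr); pose proof (Hslope_bounds r hr); lra.
Qed.

Lemma Hfun_eq0 r : 0 < r -> H r = 0 -> r = rH.
Proof.
intros hr e; rewrite Hfun_factor in e by exact hr.
pose proof (Hslope_neg r hr).
apply Rmult_integral in e as [e|e]; lra.
Qed.

Lemma continuity_pt_X r : 0 < r -> continuity_pt X r.
Proof.
intros hr; destruct (X_root r hr) as [hXr eXr].
apply (continuity_pt_lipschitz X (fun r => sqrt (rg / r)) r (X r / X r ^ (n - 1)) (r / 2)).
- lra.
- left; apply Rdiv_lt_0_compat; [|apply pow_lt]; lra.
- intros s hs; apply Rabs_def2 in hs; destruct (X_root s ltac:(lra)) as [hXs eXs].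
  pose proof (pow_lt (X r) (n - 1) hXr).
  apply Rmult_le_reg_r with (X r ^ (n - 1)); [lra|].
  replace (X r / X r ^ (n - 1) * Rabs (sqrt (rg / s) - sqrt (rg / r)) * X r ^ (n - 1))
    with (Rabs (sqrt (rg / s) - sqrt (rg / r)) * X r) by (field; lra).
  apply root_lipschitz; [exact hn|apply sqrt_div_pos; lra|lra|lra|lra].
- apply continuity_pt_sqrt_div; lra.
Qed.

Lemma continuity_pt_hsum_X m y r : 0 < r -> continuity_pt (fun r => hsum m (X r) y) r.
Proof.
intros hr; apply (continuity_pt_comp X (fun x => hsum m x y)).
- apply continuity_pt_X, hr.
- apply continuity_hsum.
Qed.

Lemma continuity_pt_Hslope r : 0 < r -> continuity_pt Hslope r.
Proof.
intros hr; pose proof horizon_pos; destruct (X_root r hr) as [hXr _].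
pose proof (sqrt_div_pos r hr); pose proof (sqrt_div_pos rH horizon_pos).
pose proof (hsum_ge0 n (X r) x0 ltac:(lra) ltac:(lra)).
unfold Hslope, root_shift_factor; continuity_pt_split;
  try (apply continuity_pt_hsum_X || apply continuity_pt_sqrt_div); try lra.
apply Rgt_not_eq, Rmult_lt_0_compat; [apply Rmult_lt_0_compat|]; lra.
Qed.

Lemma derivable_pt_lim_Hfun : derivable_pt_lim H rH (Hslope rH).
Proof.
pose proof horizon_pos.
apply (derivable_pt_lim_slope H Hslope rH rH); [lra| |apply continuity_pt_Hslope; lra].
intros x hx; apply Rabs_def2 in hx.
rewrite Hfun_horizon, Hfun_factor by lra; ring.
Qed.

Lemma Hfun_linear_bounds r1 : rH < r1 -> exists k K, 0 < k /\ 0 < K /\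
  forall s, rH < s <= r1 -> k * (s - rH) <= - H s <= K * (s - rH).
Proof.
intros hr1; pose proof horizon_pos as hrH0.
set (a0 := sqrt (rg / rH)); assert (ha0 : 0 < a0) by apply (sqrt_div_pos rH hrH0).
exists (rg / (r1 * rH * (a0 + a0))), ((1 + INR n) * rg / (rH * rH * a0)).
pose proof (pos_INR n).
split; [apply Rdiv_lt_0_compat; [lra|]; repeat apply Rmult_lt_0_compat; lra|].
split; [apply Rdiv_lt_0_compat; [nra|]; repeat apply Rmult_lt_0_compat; lra|].
intros s hs; rewrite Hfun_factor by lra.
destruct (Hslope_bounds s ltac:(lra)) as [hlo hhi]; fold a0 in hlo, hhi.
assert (has : 0 < sqrt (rg / s) <= a0).
{ split; [apply sqrt_div_pos; lra|]. apply sqrt_le_1_alt.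
  apply Rmult_le_compat_l; [lra|]; apply Rinv_le_contravar; lra. }
assert (hd : rH * rH * a0 <= s * rH * (sqrt (rg / s) + a0) <= r1 * rH * (a0 + a0)).
{ split; apply Rmult_le_compat; try nra. }
assert (hlo' : rg / (r1 * rH * (a0 + a0)) <= - Hslope s).
{ eapply Rle_trans; [|exact hlo]; apply Rmult_le_compat_l; [lra|].
  apply Rinv_le_contravar; [repeat apply Rmult_lt_0_compat|]; lra. }
assert (hhi' : - Hslope s <= (1 + INR n) * rg / (rH * rH * a0)).
{ eapply Rle_trans; [exact hhi|]; apply Rmult_le_compat_l; [nra|].
  apply Rinv_le_contravar; [repeat apply Rmult_lt_0_compat|]; lra. }
split; nra.
Qed.

Lemma continuity_pt_Hfun r : 0 < r -> continuity_pt H r.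
Proof.
intros hr; destruct (X_root r hr) as [hXr _].
unfold H, Hfun; continuity_pt_split;
  try (apply continuity_pt_X || apply continuity_pt_sqrt_div); lra.
Qed.

Lemma Riemann_integrable_inv_Hfun r r1 : rH < r < r1 ->
  Riemann_integrable (fun s => / H s) r r1.
Proof.
intros hr; pose proof horizon_pos.
apply continuity_implies_RiemannInt; [lra|]; intros s hs.
apply (continuity_pt_inv H); [apply continuity_pt_Hfun; lra|].
intro e; apply Hfun_eq0 in e; lra.
Qed.

End Horizon.

Theorem mainTheorem5 (rg E : R) (n : nat) (X : R -> R)
  (hrg : 0 < rg) (hE : 0 < E) (hn : n = 2%nat \/ n = 3%nat)
  (hX : is_root_fun n rg E X) :
  let H := Hfun n rg E X in
  let rH := rH_formula n rg E in
  (forall r Y, 0 < r -> 0 < Y -> Y ^ n + sqrt (rg / r) * Y - E = 0 -> Y = X r) /\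
  (0 < rH /\ H rH = 0 /\ (forall r, 0 < r -> H r = 0 -> r = rH)) /\
  (exists d, derivable_pt_lim H rH d /\ d <> 0) /\
  (forall r1, rH < r1 ->
     (forall r, rH < r < r1 -> inhabited (Riemann_integrable (fun s => / H s) r r1)) /\
     (forall M, exists delta, 0 < delta /\
        forall r (pr : Riemann_integrable (fun s => / H s) r r1),
          rH < r < rH + delta -> r < r1 -> M < Rabs (RiemannInt pr)) /\
     (exists c1 c2 C delta, 0 < c1 /\ 0 < c2 /\ 0 < delta /\
        forall r (pr : Riemann_integrable (fun s => / H s) r r1),
          rH < r < rH + delta -> r < r1 ->
          c1 * Rabs (ln (r - rH)) - C <= Rabs (RiemannInt pr) /\
          Rabs (RiemannInt pr) <= c2 * Rabs (ln (r - rH)) + C)).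
Proof.
intros H rH.
assert (hn0 : (0 < n)%nat) by lia.
destruct (rH_formula_spec n rg E hE hn) as (x0 & hx0 & hx0E & hrHx).
pose proof (horizon_pos n rg rH x0 hn0 hrg hx0 hrHx) as hrH.
split; [exact (X_unique n rg E X hrg hX)|].
split; [split; [exact hrH|split]|].
{ exact (Hfun_horizon n rg E rH x0 X hn0 hrg hX hx0 hx0E hrHx). }
{ exact (Hfun_eq0 n rg E rH x0 X hn0 hrg hX hx0 hx0E hrHx). }
split.
{ exists (Hslope n rg rH x0 X rH); split.
  - exact (derivable_pt_lim_Hfun n rg E rH x0 X hn0 hrg hX hx0 hx0E hrHx).
  - exact (Rlt_not_eq _ _ (Hslope_neg n rg E rH x0 X hn0 hrg hX hx0 hrHx rH hrH)). }
intros r1 hr1.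
destruct (Hfun_linear_bounds n rg E rH x0 X hn0 hrg hX hx0 hx0E hrHx r1 hr1)
  as (k & K & hk & hK & hb).
pose proof (fun r pr hr => RiemannInt_inv_linear_bounds H rH r r1 k K hk hK hr hb pr) as hI.
set (L := ln (r1 - rH)) in hI.
split; [|split].
- intros r hr; constructor.
  exact (Riemann_integrable_inv_Hfun n rg E rH x0 X hn0 hrg hX hx0 hx0E hrHx r r1 hr).
- intros M; exists (exp (- (K * Rabs M + Rabs L))); split; [apply exp_pos|].
  intros r pr hr hr1'.
  apply (log_unbounded K L (r - rH)); [lra|lra|apply (hI r pr); lra].
- exists (/ K), (/ k), (Rabs L * (/ k + / K)), 1.
  split; [apply Rinv_0_lt_compat, hK|split; [apply Rinv_0_lt_compat, hk|split; [lra|]]].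
  intros r pr hr hr1'; apply log_sandwich; [lra|lra|lra|apply (hI r pr); lra].
Qed.
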